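(* Let $G$ be a triangle-free graph with $n$ vertices and $e$ edges, and let $P$ be a greedy partition of $G$ of size $r=r(P)$ (equivalently, the size-$2$ cliques of $P$ form a maximal matching of $G$ with $n-r$ edges). Then $e\le r(n-r)$.
   Context: A good partition $P$ of $V(G)$ is a partition of $V(G)$ into disjoint sets $C_1, \dots, C_r$, each inducing a complete subgraph of $G$, indexed so that $|C_1|\le\dots\le |C_r|$; its size is $r(P)=r$. It is a greedy partition if for every $i\ge1$ the set $C_1\cup\dots\cup C_i$ induces a subgraph with no complete subgraph on $|C_i|+1$ vertices. For triangle-free $G$ the cliques have size $1$ or $2$. *)

From mathcomp Require Import all_boot.
Set Implicit Arguments. Unset Strict Implicit. Unset Printing Implicit Defensive.

Definition simple_graph (T : finType) (g : rel T) : Prop :=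
  symmetric g /\ irreflexive g.

Definition triangle_free (T : finType) (g : rel T) : Prop :=
  forall x y z : T, ~ [&& g x y, g y z & g x z].

Definition is_clique (T : finType) (g : rel T) (A : {set T}) : bool :=
  [forall x in A, forall y in A, (x != y) ==> g x y].

Definition edges (T : finType) (g : rel T) : {set {set T}} :=
  [set A : {set T} | [exists x, exists y, g x y && (A == [set x; y])]].

Definition good_partition (T : finType) (g : rel T) (P : seq {set T}) : Prop :=
  [/\ uniq P, partition [set C : {set T} | C \in P] [set: T], all (fun C : {set T} => is_clique g C) P
    & sorted leq [seq #|C| | C : {set T} <- P]].

Definition greedy_partition (T : finType) (g : rel T) (P : seq {set T}) : Prop :=
  good_partition g P /\
  forall i, i < size P ->
    forall K : {set T},
      K \subset \bigcup_(C <- take i.+1 P) C ->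
      is_clique g K -> #|K| != #|nth set0 P i|.+1.

From mathcomp Require Import all_boot.
From mathcomp Require Import zify.

(* In a triangle-free graph every block of a good partition is a vertex or an
   edge, and a vertex has at most one neighbour in each edge block.  Greediness
   makes the singleton blocks pairwise non-adjacent, so a singleton vertex has
   degree at most b, the number of edge blocks, while the two vertices of an
   edge block have total degree at most n.  With r - b singletons and
   n = r + b, summing degrees gives 2e <= (r - b) b + b n = 2 r (n - r). *)

Set Implicit Arguments.
Unset Strict Implicit.
Unset Printing Implicit Defensive.

Lemma sum_if_count (I : Type) (s : seq I) (p : pred I) (u v : nat) :
  \sum_(i <- s) (if p i then u else v) = count p s * u + count (predC p) s * v.
Proof.
elim: s => [|i s IH]; first by rewrite big_nil.
by rewrite big_cons IH /=; case: (p i) => /=; lia.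
Qed.

Lemma big_partition_seq (R : Type) (idx : R) (op : Monoid.com_law idx)
    (T : finType) (P : seq {set T}) (F : T -> R) :
  uniq P -> partition [set C | C \in P] [set: T] ->
  \big[op/idx]_x F x = \big[op/idx]_(C <- P) \big[op/idx]_(x in C) F x.
Proof.
move=> P_uniq /(set_partition_big (op := op) _ (E := F)).
rewrite (eq_bigl xpredT) => [->|x]; last by rewrite inE.
by rewrite big_uniq //; apply: eq_bigl => C; rewrite inE.
Qed.

Lemma sum_nat_pred (T : finType) (A : {pred T}) (p : pred T) :
  \sum_(x in A) (p x : nat) = #|[set x in A | p x]|.
Proof. by rewrite -sum1dep_card big_mkcondr. Qed.

Section SimpleGraph.

Variables (T : finType) (g : rel T).
Hypotheses (g_sym : symmetric g) (g_irr : irreflexive g).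

Lemma card_edge A : A \in edges g -> #|A| = 2.
Proof.
rewrite inE => /existsP[x /existsP[y /andP[gxy /eqP->]]].
by rewrite cards2; case: eqP gxy => [->|]; rewrite ?g_irr.
Qed.

Lemma card_edges_at x : #|[set A in edges g | x \in A]| <= \sum_y (g x y : nat).
Proof.
rewrite sum_nat_pred; apply: leq_trans _ (leq_imset_card (fun y => [set x; y]) _).
apply: subset_leq_card; apply/subsetP => A; rewrite inE => /andP[].
rewrite inE => /existsP[u /existsP[v /andP[guv /eqP->]]].
rewrite !inE => /orP[]/eqP->; apply/imsetP.
  by exists v; rewrite ?inE.
by exists u; rewrite ?inE 1?g_sym // setUC.
Qed.

Lemma handshake_le : 2 * #|edges g| <= \sum_x \sum_y (g x y : nat).
Proof.
rewrite mulnC -sum_nat_const -(eq_bigr _ card_edge).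
under eq_bigr do rewrite -sum1_card big_mkcond.
rewrite exchange_big /=; apply: leq_sum => x _.
by rewrite -big_mkcondr sum1dep_card card_edges_at.
Qed.

End SimpleGraph.

Section Cliques.

Variables (T : finType) (g : rel T).

Lemma clique_adj C x y : is_clique g C -> x \in C -> y \in C -> x != y -> g x y.
Proof. by move=> /forall_inP clC /clC/forall_inP clxC /clxC/implyP. Qed.

Lemma clique2 x y : symmetric g -> g x y -> is_clique g [set x; y].
Proof.
move=> g_sym gxy; apply/forall_inP => u; rewrite !inE => /orP[]/eqP->;
apply/forall_inP => v; rewrite !inE => /orP[]/eqP->; by rewrite ?eqxx ?(g_sym y x) ?gxy ?implybT.
Qed.

Hypothesis g_tf : triangle_free g.

Lemma sum_clique_adj_le1 C x : is_clique g C -> \sum_(y in C) (g x y : nat) <= 1.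
Proof.
move=> clC; rewrite sum_nat_pred leqNgt; apply/card_gt1P => -[u [v []]].
rewrite !inE => /andP[uC gxu] /andP[vC gxv] neq_uv.
by apply: (@g_tf x u v); rewrite gxu gxv (clique_adj clC).
Qed.

Lemma clique_card_le2 C : irreflexive g -> is_clique g C -> #|C| <= 2.
Proof.
move=> g_irr clC; have [x xC|C0] := pickP [in C]; last by rewrite eq_card0.
rewrite (cardsD1 x) xC ltnS; apply: leq_trans (sum_clique_adj_le1 x clC).
rewrite sum_nat_pred; apply: subset_leq_card; apply/subsetP => y.
by rewrite !inE => /andP[neq_yx yC]; rewrite yC (clique_adj clC) // eq_sym.
Qed.

Lemma sum_clique_deg_le C : symmetric g -> is_clique g C ->
  \sum_(x in C) \sum_y (g x y : nat) <= #|T|.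
Proof.
move=> g_sym clC; rewrite exchange_big /= -sum1_card; apply: leq_sum => y _.
under eq_bigr do rewrite g_sym.
exact: sum_clique_adj_le1.
Qed.

End Cliques.

Section GreedyPartition.

Variables (T : finType) (g : rel T) (P : seq {set T}).
Hypotheses (g_sym : symmetric g) (g_irr : irreflexive g) (g_tf : triangle_free g).

Lemma good_partition_card12 C : good_partition g P -> C \in P -> 0 < #|C| <= 2.
Proof.
move=> [_ /and3P[_ _ P_set0] P_cliques _] CP.
rewrite card_gt0 (clique_card_le2 g_tf g_irr (allP P_cliques C CP)) andbT.
by apply: contraNneq P_set0 => <-; rewrite inE.
Qed.

Lemma greedy_singletons_nonadj x z :
  greedy_partition g P -> [set x] \in P -> [set z] \in P -> ~~ g x z.
Proof.
move=> [_ greedy] xP zP; apply/negP => gxz.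
wlog le_xz : x z xP zP gxz / index [set x] P <= index [set z] P.
  move=> IH; have [|/ltnW] := leqP (index [set x] P) (index [set z] P); first exact: IH.
  by apply: IH; rewrite // g_sym.
have neq_xz : x != z by apply: contraTneq gxz => ->; rewrite g_irr.
have in_prefix C : C \in P -> index C P <= index [set z] P ->
    C \subset \bigcup_(D <- take (index [set z] P).+1 P) D.
  move=> CP le_C; rewrite bigcup_seq; apply: bigcup_sup.
  by rewrite in_take // ltnS.
have z_idx : index [set z] P < size P by rewrite index_mem.
have sub_xz : [set x; z] \subset \bigcup_(D <- take (index [set z] P).+1 P) D.
  by rewrite subUset in_prefix // in_prefix.
move: (greedy _ z_idx _ sub_xz (clique2 g_sym gxz)).
by rewrite nth_index // cards1 cards2 neq_xz.
Qed.

Lemma greedy_singleton_deg x : greedy_partition g P -> [set x] \in P ->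
  \sum_y (g x y : nat) <= count (fun C : {set T} => #|C| == 2) P.
Proof.
move=> gP xP; have [[P_uniq P_part P_cliques _] _] := gP.
rewrite (big_partition_seq _ _ P_uniq P_part) -sum1_count [leqRHS]big_mkcond /=.
rewrite big_seq [leqRHS]big_seq; apply: leq_sum => D DP.
case: ifP => [_|D_not2]; first exact: sum_clique_adj_le1 (allP P_cliques D DP).
have /cards1P[z D_z] : #|D| == 1 by have := good_partition_card12 gP.1 DP; lia.
by rewrite D_z big_set1 (negbTE (greedy_singletons_nonadj gP xP _)) // -D_z.
Qed.

End GreedyPartition.

Theorem claim7 (T : finType) (g : rel T) (P : seq {set T}) :
  simple_graph g -> triangle_free g -> greedy_partition g P ->
  #|edges g| <= size P * (#|T| - size P).
Proof.
move=> [g_sym g_irr] g_tf gP; have [[P_uniq P_part P_cliques _] _] := gP.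
pose pair (C : {set T}) := #|C| == 2.
have card12 C : C \in P -> 0 < #|C| <= 2 := good_partition_card12 g_irr g_tf gP.1.
have card_T : #|T| = count pair P * 2 + count (predC pair) P * 1.
  rewrite -sum_if_count -sum1_card (big_partition_seq _ _ P_uniq P_part) /=.
  by apply: eq_big_seq => C /card12; rewrite sum1_card /pair; case: eqP => //; lia.
have deg_le : \sum_x \sum_y (g x y : nat) <=
    \sum_(C <- P) (if pair C then #|T| else count pair P).
  rewrite (big_partition_seq _ _ P_uniq P_part) /= big_seq [leqRHS]big_seq.
  apply: leq_sum => C CP; case: ifP => [_|C_not2].
    exact: sum_clique_deg_le g_sym (allP P_cliques C CP).
  have /cards1P[x C_x] : #|C| == 1 by have := card12 C CP; rewrite /pair in C_not2; lia.
  by rewrite C_x big_set1 (greedy_singleton_deg g_sym g_irr g_tf gP) -?C_x.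
have := leq_trans (handshake_le g_sym g_irr) deg_le.
rewrite sum_if_count -(count_predC pair) card_T; nia.
Qed.
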